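(* Let $n$ be a positive integer and let $\Phi,\Psi\colon[n]^n\to[n]^n$ be the maps defined in the context. Then: (1) for all $\mathbf a\in[n]^n$, $z(\mathbf a)=\operatorname{run}(\Phi(\mathbf a))$, $Z(\mathbf a)=\operatorname{Run}(\Phi(\mathbf a))$, $\operatorname{run}(\mathbf a)=z(\Psi(\mathbf a))$ and $\operatorname{Run}(\mathbf a)=Z(\Psi(\mathbf a))$; (2) $\Phi$ and $\Psi$ are bijections and $\Psi=\Phi^{-1}$; (3) $\Phi(\mathsf{PF}_n)=\mathsf{PF}_n$.
   Context: Let $[n]=\{1,\dots,n\}$ and write $\mathbf a\in[n]^n$ as $(a_1,\dots,a_n)$, also viewed as a function $j\mapsto a_j$. $\mathsf{PF}_n$ is the set of $\mathbf a\in[n]^n$ with $|\{j:a_j\le i\}|\ge i$ for every $i\in[n]$ (parking functions). Center: $Z(\mathbf a)$ is the largest subset $X=\{x_1<\dots<x_\ell\}\subseteq[n]$ with $a_{x_i}\le i$ for all $i\in[\ell]$; $z(\mathbf a)=|Z(\mathbf a)|$. Run: if $1\in\{a_1,\dots,a_n\}$, $\operatorname{run}(\mathbf a)=\max\{i\in[n]: [i]\subseteq\{a_1,\dots,a_n\}\}$; otherwise $\operatorname{run}(\mathbf a)=0$. $\operatorname{Run}(\mathbf a)=\{\max\{j: a_j=m\}: 1\le m\le \operatorname{run}(\mathbf a)\}$ (empty if $\operatorname{run}(\mathbf a)=0$). For a permutation $\mathbf w=(w_1,\dots,w_k)\in\mathfrak S_k$, define $f_{w_i}=|\{m\in[i]: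 w_m\le w_i\}|$ for $i\in[k]$ and $t_k(\mathbf w)=(f_1,\dots,f_k)$; $t_k$ is a bijection from $\mathfrak S_k$ onto $[1]\times[2]\times\dots\times[k]$. Definition of $\Phi$: if $Z(\mathbf a)=\varnothing$, $\Phi(\mathbf a)=\mathbf a$. Otherwise let $Z(\mathbf a)=\{i_1<\dots<i_k\}$, let $\mathbf b=b_1\cdots b_k=t_k^{-1}(a_{i_1}\cdots a_{i_k})\in\mathfrak S_k$, and let $\sigma_{\mathbf a}\in\mathfrak S_n$ be given by $\sigma_{\mathbf a}(1)=k+1$, $\sigma_{\mathbf a}(j)=b_{j-1}$ for $2\le j\le k+1$, $\sigma_{\mathbf a}(j)=j$ for $k+2\le j\le n$. Then $\Phi(\mathbf a)(j)=b_\ell$ if $j=i_\ell\in Z(\mathbf a)$, and $\Phi(\mathbf a)(j)=\sigma_{\mathbf a}(a_j)$ if $j\notin Z(\mathbf a)$. Definition of $\Psi$: if $\operatorname{Run}(\mathbf a)=\varnothing$, $\Psi(\mathbf a)=\mathbf a$. Otherwise let $\operatorname{Run}(\mathbf a)=\{i_1<\dots<i_k\}$, let $\mathbf c=c_1\cdots c_k=t_k(a_{i_1}\cdots a_{i_k})$, and let $\tau_{\mathbf a}\in\mathfrak S_n$ be given by $\tau_{\mathbf a}(j)=\ell+1$ if $j=a_{i_\ell}\in[k]$, $\tau_{\mathbf a}(k+1)=1$, $\tau_{\mathbf a}(j)=j$ for $k+2\le j\le n$. Then $\Psi(\mathbf a)(j)=c_\ell$ if $j=i_\ell\in\operatorname{Run}(\mathbf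 a)$, and $\Psi(\mathbf a)(j)=\tau_{\mathbf a}(a_j)$ if $j\notin\operatorname{Run}(\mathbf a)$. *)

(* Encoding: an element a of [n]^n is a finite function
   a : {ffun 'I_n -> 'I_n}; position j : 'I_n stands for the paper's position
   j+1, and the value a j : 'I_n stands for the paper's value (a j).+1
   (accessed through [v1 a j]). *)
From mathcomp Require Import all_boot all_order.
Set Implicit Arguments. Unset Strict Implicit. Unset Printing Implicit Defensive.

Section Defs.
Variable n : nat.
Implicit Types (a : {ffun 'I_n -> 'I_n}) (X : {set 'I_n}).

Definition v1 a (j : 'I_n) : nat := (a j).+1.

Definition is_PF a : bool :=
  [forall i : 'I_n, i.+1 <= #|[set j | v1 a j <= i.+1]|].

Definition rank X (x : 'I_n) : nat := #|[set y in X | y <= x]|.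

Definition center_ok a X : bool := [forall x in X, v1 a x <= rank X x].

(* Z(a): the largest such subset (the union of all of them, which is itself
   admissible, hence the maximum w.r.t. inclusion and cardinality) *)
Definition Zc a : {set 'I_n} := \bigcup_(X | center_ok a X) X.
Definition zc a : nat := #|Zc a|.

Definition vals a : seq nat := [seq v1 a j | j : 'I_n].

Definition run a : nat :=
  \max_(i < n.+1 | all (fun m => m \in vals a) (iota 1 i)) i.

Definition Run a : {set 'I_n} :=
  [set j : 'I_n | (v1 a j <= run a) &&
                  [forall k : 'I_n, (v1 a k == v1 a j) ==> (k <= j)]].

End Defs.

(* t_k on permutations of [k] in one-line notation w = w_1 ... w_k (a
   sequence, perm_eq to iota 1 k): the output is (f_1,...,f_k) with
   f_{w_i} = |{m in [i] : w_m <= w_i}|. *)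
Definition tk (w : seq nat) : seq nat :=
  [seq count (fun x => x <= v) (take (index v w).+1 w) | v <- iota 1 (size w)].

(* t_k^{-1}: the permutation w of [k] with t_k(w) = c (t_k is a bijection
   onto [1] x ... x [k]); default iota 1 k if none exists. *)
Definition tkinv (k : nat) (c : seq nat) : seq nat :=
  head (iota 1 k) [seq w <- permutations (iota 1 k) | tk w == c].

Section Maps.
Variable n : nat.
Implicit Types (a : {ffun 'I_n -> 'I_n}).

Definition Phi a : {ffun 'I_n -> 'I_n} :=
  let X := Zc a in
  if X == set0 then a else
  let k := #|X| in
  (* b = b_1 ... b_k = t_k^{-1}(a_{i_1} ... a_{i_k}); enum X is increasing *)
  let b := tkinv k [seq v1 a i | i <- enum X] in
  let sigma (m : nat) :=
    if m == 1 then k.+1 else if m <= k.+1 then nth 0 b (m - 2) else m in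
  [ffun j => insubd j
     (if j \in X then nth 0 b (rank X j).-1 else sigma (v1 a j)).-1].

Definition Psi a : {ffun 'I_n -> 'I_n} :=
  let X := Run a in
  if X == set0 then a else
  let k := #|X| in
  let w := [seq v1 a i | i <- enum X] in
  let c := tk w in
  let tau (m : nat) :=
    if m <= k then (index m w).+2 else if m == k.+1 then 1 else m in
  [ffun j => insubd j
     (if j \in X then nth 0 c (rank X j).-1 else tau (v1 a j)).-1].

End Maps.

(* Z(a) is the union of all admissible sets, hence itself admissible and
   maximal: a position j outside Z(a) has a_j >= rank(j) + 2, where rank(j)
   counts the elements of Z(a) up to j.  On Z(a), Phi writes the permutation
   b = t_k^{-1}(a|Z) of [k]; outside, sigma maps a value in [2, k+1] to an
   entry of b and fixes larger values.  So Phi(a) takes every value of [k] on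
   Z(a) and never the value k+1, whence run(Phi a) = k; and the last occurrence
   of each value lies in Z(a), since an outside j with value b_(a_j - 1) is
   followed by the centre position of rank a_j - 1.  Thus Run(Phi a) = Z(a),
   and as t_k(b) = a|Z and tau inverts sigma, Psi (Phi a) = a.  Being injective
   on the finite set [n]^n, Phi is bijective with inverse Psi.  Finally Phi
   maps PF_n into PF_n: thresholds i <= k are reached on Z(a) alone, and for
   i > k the sets {j : a_j <= i} do not change; injectivity gives equality. *)

From mathcomp Require Import all_boot all_order zify.
Set Implicit Arguments. Unset Strict Implicit. Unset Printing Implicit Defensive.

Definition tk_entry (w : seq nat) (v : nat) : nat :=
  count (fun x => x <= v) (take (index v w).+1 w).

Lemma tkE w : tk w = [seq tk_entry w v | v <- iota 1 (size w)].
Proof. by []. Qed.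

Lemma tk_entry_insert_larger L R m v :
  v \in L ++ R -> v < m -> tk_entry (L ++ m :: R) v = tk_entry (L ++ R) v.
Proof.
move=> vLR vm; rewrite /tk_entry !index_cat.
case: ifP => vL.
  have idx_lt : index v L < size L by rewrite index_mem.
  rewrite !take_cat; case: ifP => // _.
  by rewrite (_ : (index v L).+1 - size L = 0) ?take0 //; lia.
have vR : v \in R by move: vLR; rewrite mem_cat vL.
have /negbTE mv : m != v by lia.
rewrite /= mv !take_cat !ifF; try lia.
have -> : (size L + (index v R).+1).+1 - size L = (index v R).+2 by lia.
have -> : (size L + index v R).+1 - size L = (index v R).+1 by lia.
by rewrite /= !count_cat /= leqNgt vm.
Qed.

Lemma tk_entry_inserted L R m :
  m \notin L -> all (fun x => x <= m) L -> tk_entry (L ++ m :: R) m = (size L).+1.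
Proof.
move=> mL; rewrite all_count => /eqP Lm.
rewrite /tk_entry index_cat (negbTE mL) /= eqxx addn0 take_cat ifF; last lia.
by rewrite subSnn /= take0 count_cat /= leqnn Lm; lia.
Qed.

Definition subexceedant (c : seq nat) : Prop :=
  forall p, p < size c -> 0 < nth 0 c p <= p.+1.

Lemma subexceedant_rcons c x : subexceedant (rcons c x) ->
  subexceedant c /\ 0 < x <= (size c).+1.
Proof.
move=> cx; split; last by have := cx (size c); rewrite size_rcons nth_rcons ltnn eqxx; apply.
by move=> p pc; have := cx p; rewrite size_rcons nth_rcons pc; apply; lia.
Qed.

(* Inserting the new maximum (size c).+1 into a preimage w' of c right after
   its first x-1 entries appends x to the image and leaves the other entries. *)
Lemma tk_onto c : subexceedant c ->
  exists2 w, perm_eq w (iota 1 (size c)) & tk w = c.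
Proof.
elim/last_ind: c => [_|c x IH]; first by exists [::].
move=> /subexceedant_rcons [/IH [w' w'perm tkw'] x_range].
have sw' : size w' = size c by rewrite (perm_size w'perm) size_iota.
have w'_range v : v \in w' -> 0 < v <= size c.
  by rewrite (perm_mem w'perm) mem_iota; lia.
have iotaS : iota 1 (size c).+1 = rcons (iota 1 (size c)) (size c).+1.
  by rewrite -cats1 -[[:: _]]/(iota (1 + size c) 1) -iotaD addn1.
set L := take x.-1 w'; set R := drop x.-1 w'.
have LR : L ++ R = w' by rewrite cat_take_drop.
have sL : size L = x.-1 by rewrite size_takel // sw'; lia.
exists (L ++ (size c).+1 :: R).
  rewrite size_rcons iotaS -cat1s perm_catCA /= LR perm_sym perm_rcons perm_cons.
  by rewrite perm_sym.
rewrite tkE (_ : size (L ++ _) = (size c).+1); last first.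
  by rewrite -sw' -LR !size_cat /= addnS.
rewrite iotaS map_rcons; congr rcons.
  rewrite -[in RHS]tkw' tkE sw'; apply/eq_in_map => v; rewrite mem_iota => v_range.
  by rewrite -LR tk_entry_insert_larger ?LR ?(perm_mem w'perm) ?mem_iota //; lia.
rewrite tk_entry_inserted ?sL; first lia.
  by apply/negP => /mem_take /w'_range; lia.
by apply/allP => v /mem_take /w'_range; lia.
Qed.

Lemma tkinvP c : subexceedant c ->
  perm_eq (tkinv (size c) c) (iota 1 (size c)) /\ tk (tkinv (size c) c) = c.
Proof.
move=> /tk_onto [w wperm tkw]; rewrite /tkinv.
set F := [seq _ <- _ | _].
have wF : w \in F by rewrite mem_filter tkw eqxx mem_permutations.
have : head (iota 1 (size c)) F \in F by case: F wF => //= u F _; rewrite mem_head.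
by rewrite mem_filter mem_permutations => /andP [/eqP -> ->].
Qed.

Lemma v1_bounds n (a : {ffun 'I_n -> 'I_n}) j : 0 < v1 a j <= n.
Proof. exact: ltn_ord. Qed.

Lemma val_insubd_pred n (j : 'I_n) v : 0 < v <= n -> (val (insubd j v.-1)).+1 = v.
Proof. by move=> v_range; rewrite val_insubd ifT; lia. Qed.

Lemma leq_card_sublevel (T : finType) (f : T -> nat) p :
  (forall m, 0 < m <= p -> exists x, f x = m) -> p <= #|[set x | f x <= p]|.
Proof.
move=> onto; rewrite -[p in p <= _](size_iota 1) cardE -(size_map f).
apply: uniq_leq_size (iota_uniq 1 p) _ => m; rewrite mem_iota => m_range.
have [x fx] : exists x, f x = m by apply: onto; lia.
by apply/mapP; exists x; rewrite // mem_enum inE fx; lia.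
Qed.

Section Rank.
Variable n : nat.
Implicit Types (X Y : {set 'I_n}) (x y : 'I_n).

Lemma count_le_index (s : seq 'I_n) x : sorted ltn (map val s) -> x \in s ->
  count (fun y : 'I_n => y <= x) s = (index x s).+1.
Proof.
elim: s => // y s IH /= s_sorted.
have y_min : all (fun z => y < z) (map val s) := order_path_min ltn_trans s_sorted.
rewrite in_cons; case: eqP => [-> _ | xy /= xs].
  rewrite leqnn eqxx; congr _.+1; apply/eqP; rewrite -leqn0 leqNgt -has_count.
  apply/hasP => -[z zs]; apply/negP; rewrite -ltnNge.
  by move/allP: y_min; apply; rewrite map_f.
have yx : y < x by move/allP: y_min; apply; rewrite map_f.
rewrite (ltnW yx) IH ?(path_sorted s_sorted) //.
by case: eqP => // yx'; rewrite yx' in xy.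
Qed.

Lemma sorted_enum X : sorted ltn (map val (enum X)).
Proof.
rewrite -[enum _](eq_filter (mem_enum _)) -(eq_filter (mem_map val_inj _)).
by rewrite -filter_map (sorted_filter ltn_trans) // unlock val_ord_enum iota_ltn_sorted.
Qed.

Lemma rank_count X x : rank X x = count (fun y : 'I_n => y <= x) (enum X).
Proof.
rewrite /rank (_ : [set y in X | y <= x] = X :&: [set y : 'I_n | y <= x]).
  by rewrite cardE (perm_size (enum_setI _ _)) size_filter; apply: eq_count => y; rewrite inE.
by apply/setP => y; rewrite !inE.
Qed.

Lemma rankE X x : x \in X -> rank X x = (index x (enum X)).+1.
Proof. by move=> xX; rewrite rank_count count_le_index ?sorted_enum ?mem_enum. Qed.

Lemma rank_nth X x0 p : p < #|X| -> rank X (nth x0 (enum X) p) = p.+1.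
Proof.
move=> pX; rewrite rankE ?index_uniq ?enum_uniq -?cardE //.
by rewrite -mem_enum mem_nth -?cardE.
Qed.

Lemma rank_onto X p : p < #|X| -> exists2 x, x \in X & rank X x = p.+1.
Proof.
move=> pX; have [x0 _] : exists x0, x0 \in X by apply/card_gt0P; apply: leq_ltn_trans pX.
by exists (nth x0 (enum X) p); rewrite ?rank_nth // -mem_enum mem_nth -?cardE.
Qed.

Lemma rank_bounds X x : x \in X -> 0 < rank X x <= #|X|.
Proof.
move=> xX; apply/andP; split; first by apply/card_gt0P; exists x; rewrite !inE xX /=.
by apply: subset_leq_card; apply/subsetP => y; rewrite inE => /andP [].
Qed.

Lemma rank_inj X : {in X &, injective (rank X)}.
Proof.
move=> x y xX yX; rewrite !rankE // => /succn_inj eq_index.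
by rewrite -(nth_index x (_ : x \in enum X)) ?eq_index ?nth_index ?mem_enum.
Qed.

Lemma leq_rank X x y : x <= y -> rank X x <= rank X y.
Proof.
move=> xy; apply: subset_leq_card; apply/subsetP => z; rewrite !inE.
by case/andP => -> /= zx; apply: leq_trans zx xy.
Qed.

Lemma rank_subset X Y x : X \subset Y -> rank X x <= rank Y x.
Proof.
move=> /subsetP XY; apply: subset_leq_card; apply/subsetP => z; rewrite !inE.
by case/andP => /XY -> ->.
Qed.

Lemma rank_setU1 X x : x \notin X -> rank (x |: X) x = (rank X x).+1.
Proof.
move=> xX; rewrite /rank (_ : [set y in x |: X | y <= x] = x |: [set y in X | y <= x]).
  by rewrite cardsU1 !inE (negbTE xX).
by apply/setP => y; rewrite !inE; case: eqP => // ->; rewrite leqnn.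
Qed.

End Rank.

Section Statistics.
Variables (n : nat) (a : {ffun 'I_n -> 'I_n}).

Lemma center_ok_Zc : center_ok a (Zc a).
Proof.
apply/forallP => x; apply/implyP => /bigcupP [Y okY xY].
move/forallP: (okY) => /(_ x); rewrite xY => /leq_trans; apply.
exact: rank_subset (bigcup_sup Y okY).
Qed.

Lemma Zc_le_rank j : j \in Zc a -> v1 a j <= rank (Zc a) j.
Proof. by move/forallP: center_ok_Zc => /(_ j) /implyP; apply. Qed.

(* Otherwise j could be added to the admissible set Zc a. *)
Lemma Zc_maximal j : j \notin Zc a -> (rank (Zc a) j).+2 <= v1 a j.
Proof.
move=> jZ; rewrite ltnNge; apply: contra (jZ) => aj_small.
apply/bigcupP; exists (j |: Zc a); rewrite ?setU11 //.
apply/forallP => x; apply/implyP; rewrite in_setU1; case: eqP => [-> _ | _ /= xZ].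
  by rewrite rank_setU1 // ltnS.
exact: leq_trans (Zc_le_rank xZ) (rank_subset _ (subsetUr _ _)).
Qed.

Lemma run_eq k : k <= n -> (forall m, 0 < m <= k -> exists j, v1 a j = m) ->
  (forall j, v1 a j != k.+1) -> run a = k.
Proof.
move=> kn onto miss; apply/eqP; rewrite eqn_leq; apply/andP; split.
  apply/bigmax_leqP => i /allP i_run; rewrite leqNgt; apply/negP => ki.
  have : k.+1 \in vals a by apply: i_run; rewrite mem_iota; lia.
  by case/mapP => j _ /esym/eqP; rewrite (negbTE (miss j)).
apply: (@leq_bigmax_cond _ _ _ (Ordinal (_ : k < n.+1))); apply/allP => m.
rewrite mem_iota /= => m_range; have [j <-] : exists j, v1 a j = m by apply: onto; lia.
by apply/mapP; exists j; rewrite ?mem_enum.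
Qed.

End Statistics.

(* The relabelling of values in the definition of [Psi], named so that it can
   be folded there. *)
Definition tau (k : nat) (w : seq nat) (m : nat) : nat :=
  if m <= k then (index m w).+2 else if m == k.+1 then 1 else m.

Section Phi.
Variables (n : nat) (a : {ffun 'I_n -> 'I_n}).
Local Notation Z := (Zc a).
Local Notation k := #|Zc a|.
Local Notation w := [seq v1 a i | i <- enum (Zc a)].
Local Notation b := (tkinv #|Zc a| [seq v1 a i | i <- enum (Zc a)]).

Lemma card_Zc_le : k <= n.
Proof. by have := max_card Z; rewrite card_ord. Qed.

Lemma center_word_subexceedant : subexceedant w.
Proof.
rewrite /subexceedant size_map -cardE => p pk; have [x0 _] := rank_onto pk.
rewrite (nth_map x0) -?cardE // -[p.+1](rank_nth x0 pk) Zc_le_rank //.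
by rewrite -mem_enum mem_nth -?cardE.
Qed.

Lemma tkinv_center_word : perm_eq b (iota 1 k) /\ tk b = w.
Proof. by have := tkinvP center_word_subexceedant; rewrite size_map -cardE. Qed.

Lemma size_b : size b = k.
Proof. by rewrite (perm_size (proj1 tkinv_center_word)) size_iota. Qed.

Lemma uniq_b : uniq b.
Proof. by rewrite (perm_uniq (proj1 tkinv_center_word)) iota_uniq. Qed.

Lemma nth_b_range p : p < k -> 0 < nth 0 b p <= k.
Proof.
move=> pk; have : nth 0 b p \in b by rewrite mem_nth ?size_b.
by rewrite (perm_mem (proj1 tkinv_center_word)) mem_iota; lia.
Qed.

Lemma nth_b_inj p q : p < k -> q < k -> nth 0 b p = nth 0 b q -> p = q.
Proof.
by move=> pk qk /eqP; rewrite nth_uniq ?size_b ?uniq_b // => /eqP.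
Qed.

Lemma v1_Phi j : v1 (Phi a) j =
  if j \in Z then nth 0 b (rank Z j).-1
  else if v1 a j <= k.+1 then nth 0 b (v1 a j - 2) else v1 a j.
Proof.
have out_ge2 : j \notin Z -> 1 < v1 a j by move/Zc_maximal; lia.
rewrite /Phi; cbv zeta; case: eqP => [Z0 | _].
  by rewrite Z0 inE cards0 ifN // -ltnNge out_ge2 // Z0 inE.
rewrite {1}/v1 ffunE; case: ifP => jZ.
  have /nth_b_range b_range : (rank Z j).-1 < k by have := rank_bounds jZ; lia.
  by rewrite val_insubd_pred //; have := card_Zc_le; lia.
have := out_ge2 (negbT jZ) => aj_ge2; rewrite ifN; last lia.
case: ifP => aj_small; rewrite val_insubd_pred ?v1_bounds //.
have /nth_b_range : v1 a j - 2 < k by lia.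
by have := card_Zc_le; lia.
Qed.

Lemma v1_Phi_le_card j : (v1 (Phi a) j <= k) = (j \in Z) || (v1 a j <= k.+1).
Proof.
rewrite v1_Phi; case: ifP => jZ; rewrite ?orTb ?orFb.
  have r_lt : (rank Z j).-1 < k by have := rank_bounds jZ; lia.
  by have := nth_b_range r_lt; lia.
have := Zc_maximal (negbT jZ); case: ifP => aj_small aj_ge.
  have p_lt : v1 a j - 2 < k by lia.
  by have := nth_b_range p_lt; lia.
by apply/negbTE; lia.
Qed.

Lemma v1_Phi_gt_card j : k < v1 (Phi a) j ->
  [/\ j \notin Z, k.+1 < v1 a j & v1 (Phi a) j = v1 a j].
Proof.
move=> Phi_large; move: (v1_Phi_le_card j); rewrite leqNgt Phi_large.
move=> /esym/norP [jZ large]; move: large; rewrite -ltnNge => large.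
by rewrite v1_Phi (negbTE jZ) ifN -?ltnNge.
Qed.

Lemma v1_Phi_neq j : v1 (Phi a) j != k.+1.
Proof.
have [Phi_small | /v1_Phi_gt_card [_ large ->]] := leqP (v1 (Phi a) j) k; lia.
Qed.

Lemma Phi_center_onto m : 0 < m <= k -> exists2 x, x \in Z & v1 (Phi a) x = m.
Proof.
move=> m_range; have m_b : m \in b by rewrite (perm_mem (proj1 tkinv_center_word)) mem_iota; lia.
have idx_lt : index m b < k by rewrite -[X in _ < X]size_b index_mem.
have [x xZ x_rank] := rank_onto idx_lt.
by exists x; rewrite // v1_Phi xZ x_rank nth_index.
Qed.

Lemma run_Phi : run (Phi a) = k.
Proof.
apply: run_eq card_Zc_le _ v1_Phi_neq => m /Phi_center_onto [x _ <-].
by exists x.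
Qed.

Lemma Phi_center_last j j' : j \in Z -> v1 (Phi a) j' = v1 (Phi a) j -> j' <= j.
Proof.
move=> jZ; rewrite [RHS]v1_Phi jZ v1_Phi.
have r_range := rank_bounds jZ.
case: ifP => j'Z.
  have := rank_bounds j'Z => r'_range /nth_b_inj e.
  by rewrite (@rank_inj _ Z j' j) //; lia.
have := Zc_maximal (negbT j'Z); case: ifP => small a_ge.
  move=> /nth_b_inj e; rewrite leqNgt; apply/negP => /ltnW /(leq_rank Z); lia.
move=> e; have /nth_b_range : (rank Z j).-1 < k by lia.
by rewrite -e; lia.
Qed.

Lemma Phi_outside_not_last j : j \notin Z -> v1 a j <= k.+1 ->
  exists2 x : 'I_n, j < x & v1 (Phi a) x = v1 (Phi a) j.
Proof.
move=> jZ small; have a_ge := Zc_maximal jZ.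
have p_lt : v1 a j - 2 < k by lia.
have [x xZ x_rank] := rank_onto p_lt.
exists x; last by rewrite !v1_Phi xZ (negbTE jZ) small x_rank.
by rewrite ltnNge; apply/negP => /(leq_rank Z); lia.
Qed.

Lemma Run_Phi : Run (Phi a) = Z.
Proof.
apply/setP => j; rewrite inE run_Phi.
have [jZ | jZ] := boolP (j \in Z).
  rewrite v1_Phi_le_card jZ /=; apply/forallP => j'; apply/implyP => /eqP.
  exact: Phi_center_last.
rewrite v1_Phi_le_card (negbTE jZ) /=; case: leqP => //= small.
have [x jx e] := Phi_outside_not_last jZ small.
by apply/negP => /forallP /(_ x); rewrite e eqxx /= leqNgt jx.
Qed.

Lemma center_word_Phi : [seq v1 (Phi a) i | i <- enum Z] = b.
Proof.
apply: (@eq_from_nth _ 0); first by rewrite size_map size_b cardE.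
move=> p; rewrite size_map -cardE => pk; have [x0 _] := rank_onto pk.
by rewrite (nth_map x0) -?cardE // v1_Phi -mem_enum mem_nth -?cardE // rank_nth.
Qed.

Lemma tau_Phi j : j \notin Z -> tau k b (v1 (Phi a) j) = v1 a j.
Proof.
move=> jZ; have a_ge := Zc_maximal jZ; rewrite /tau v1_Phi (negbTE jZ).
have [small | large] := leqP (v1 a j) k.+1.
  have p_lt : v1 a j - 2 < k by lia.
  have := nth_b_range p_lt => b_range; rewrite ifT; last lia.
  by rewrite index_uniq ?size_b ?uniq_b //; lia.
by rewrite ifN; [rewrite ifN |]; lia.
Qed.

Lemma Psi_Phi : Psi (Phi a) = a.
Proof.
apply/ffunP => j; apply/val_inj/succn_inj; change (v1 (Psi (Phi a)) j = v1 a j).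
rewrite /Psi; cbv zeta; rewrite Run_Phi center_word_Phi; case: eqP => [Z0 | _].
  have := @Zc_maximal _ a j; rewrite v1_Phi Z0 inE cards0 => /(_ isT) a_ge.
  by rewrite ifN //; lia.
rewrite {1}/v1 ffunE; case: ifP => jZ.
  rewrite (proj2 tkinv_center_word) rankE // (nth_map j) ?index_mem ?mem_enum //.
  by rewrite nth_index ?mem_enum // val_insubd_pred ?v1_bounds.
by rewrite -/(tau _ _ _) tau_Phi ?(negbT jZ) // val_insubd_pred ?v1_bounds.
Qed.

Lemma is_PF_Phi : is_PF a -> is_PF (Phi a).
Proof.
move=> /forallP a_PF; apply/forallP => i.
have [ik | ki] := leqP i.+1 k.
  apply: leq_card_sublevel => m m_range.
  have [|x _ <-] := @Phi_center_onto m; [lia | by exists x].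
rewrite (_ : [set j | _] = [set j | v1 a j <= i.+1]) ?a_PF //.
apply/setP => j; rewrite !inE.
have [Phi_small | /v1_Phi_gt_card [_ _ ->] //] := leqP (v1 (Phi a) j) k.
rewrite (leq_trans Phi_small (ltnW ki)); move: Phi_small; rewrite v1_Phi_le_card.
case/orP => [jZ | small]; last lia.
by have := Zc_le_rank jZ; have := rank_bounds jZ; lia.
Qed.

End Phi.

Theorem theorem3p4 (n : nat) (hn : 0 < n) :
  (forall a : {ffun 'I_n -> 'I_n},
      [/\ zc a = run (Phi a), Zc a = Run (Phi a),
          run a = zc (Psi a) & Run a = Zc (Psi a)]) /\
  [/\ bijective (@Phi n), bijective (@Psi n),
      cancel (@Phi n) (@Psi n) & cancel (@Psi n) (@Phi n)] /\
  (@Phi n) @: [set a | is_PF a] = [set a | is_PF a].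
Proof.
have PhiK : cancel (@Phi n) (@Psi n) := @Psi_Phi n.
have Phi_bij : bijective (@Phi n) := injF_bij (can_inj PhiK).
have PsiK : cancel (@Psi n) (@Phi n) by apply/(bij_can_sym Phi_bij).
split; [|split].
- move=> a; have := run_Phi (Psi a); have := Run_Phi (Psi a); rewrite PsiK.
  by split; rewrite ?run_Phi ?Run_Phi.
- by split => //; exists (@Phi n).
apply/eqP; rewrite eqEcard card_imset ?leqnn ?andbT; last exact: can_inj PhiK.
apply/subsetP => _ /imsetP [a a_PF ->].
by move: a_PF; rewrite !inE; apply: is_PF_Phi.
Qed.
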